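(* Let $G=(V,E)$ be a graph and $f:\{0,1\}^V\to\mathbb{R}_{\ge0}$ a nonnegative submodular function (viewed as a function of binary assignments $\overline{X}=\{X_v\}_{v\in V}$) which is a local utility function. Given a legal $c$-coloring of $G$, there exist a randomized distributed algorithm outputting $\overline{X}$ with $E[f(\overline{X})]\ge\frac12\max_{\overline{Y}}f(\overline{Y})$, and a deterministic distributed algorithm outputting $\overline{X}$ with $f(\overline{X})\ge\frac13\max_{\overline{Y}}f(\overline{Y})$, both running in $O(c)$ communication rounds in the CONGEST model.
   Context: Submodular: $f(S)+f(T)\ge f(S\cup T)+f(S\cap T)$ for all $S,T\subseteq V$, identifying a binary assignment with the set of vertices assigned 1. $L_v[\overline{X}]$ is the restriction of an assignment to the neighbours of $v$, passed together with the 1-hop neighbourhood of $v$. $f$ is a local utility function if for every $v$ there is $g_v$ with $f(\overline{X}\cup\{X_v=\alpha\})-f(\overline{X}\cup\{X_v=\alpha'\})=g_v(L_v[\overline{X}],\alpha,\alpha')$ for all $\overline{X}$ and $\alpha,\alpha'\in\{0,1\}$. CONGEST: synchronous rounds, $O(\log n)$-bit messages per edge per round. A legal coloring gives adjacent vertices different colors. *)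

(* A model of synchronous CONGEST algorithms with randomness
   given by finitely supported distributions with real-valued weights. *)
From HB Require Import structures.
From mathcomp Require Import all_boot all_order all_algebra.
Set Implicit Arguments. Unset Strict Implicit. Unset Printing Implicit Defensive.
Import Order.TTheory GRing.Theory Num.Theory.
Local Open Scope ring_scope.

(* What a node knows initially: n, its id, the number of colours c, its colour,
   the ids of its neighbours, and an oracle for its local marginal g_v:
   given the values of its neighbours (indexed by neighbour id) and alpha, alpha',
   it returns f(X u {X_v=alpha}) - f(X u {X_v=alpha'}). *)
Record LocalInput (R : Type) := LI {
  li_n : nat; li_id : nat; li_c : nat; li_color : nat;
  li_nbrs : seq nat;
  li_g : (nat -> bool) -> bool -> bool -> R }.

(* A distributed algorithm (uniform: independent of the graph). *)
Record Alg (R : Type) := MkAlg {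
  St : Type;
  a_init : LocalInput R -> St;
  a_send : St -> nat -> seq bool;                 (* message to neighbour with given id *)
  a_step : St -> (nat -> seq bool) -> seq (R * St); (* distribution of next states given inbox *)
  a_out : St -> bool;
  a_rounds : nat -> nat -> nat }.                  (* number of rounds, as function of n and c *)

Arguments a_init {R} a.
Arguments a_send {R} a.
Arguments a_step {R} a.
Arguments a_out {R} a.
Arguments a_rounds {R} a.

Section Model.
Variable R : realFieldType.

Definition alg_valid (A : Alg R) : Prop :=
  forall s m, all (fun ps => 0 <= ps.1) (a_step A s m) &&
              (\sum_(ps <- a_step A s m) ps.1 == 1).

Definition alg_det (A : Alg R) : Prop :=
  forall s m, exists s', a_step A s m = [:: (1, s')].

Variables (V : finType) (adj : rel V).

Definition simple_graph : Prop := symmetric adj /\ irreflexive adj.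

Definition nbhd (v : V) : {set V} := [set u | adj v u].

Definition setv (X : {set V}) (v : V) (a : bool) : {set V} :=
  if a then v |: X else X :\ v.

Definition submodular (f : {set V} -> R) : Prop :=
  forall S T, f (S :|: T) + f (S :&: T) <= f S + f T.

Definition nonneg (f : {set V} -> R) : Prop := forall S, 0 <= f S.

Definition local_utility (f : {set V} -> R) : Prop :=
  forall v, exists g : {set V} -> bool -> bool -> R,
    forall X a a', f (setv X v a) - f (setv X v a') = g (X :&: nbhd v) a a'.

Definition legal_coloring (c : nat) (col : V -> nat) : Prop :=
  (forall v, col v < c)%N /\ forall u v, adj u v -> col u != col v.

Definition fmax (f : {set V} -> R) : R := \big[Num.max/0]_(Y : {set V}) f Y.

Variables (id : V -> nat) (c : nat) (col : V -> nat) (f : {set V} -> R).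

Definition ids_ok : Prop := injective id /\ forall v, (id v < #|V|)%N.

Definition local_oracle (v : V) : (nat -> bool) -> bool -> bool -> R :=
  fun L a a' => let X := [set u | adj v u && L (id u)] in
                f (setv X v a) - f (setv X v a').

Definition local_input (v : V) : LocalInput R :=
  LI #|V| (id v) c (col v) [seq id u | u <- enum V & adj v u] (local_oracle v).

Variable A : Alg R.

Definition config := V -> St A.

Definition init_config : config := fun v => a_init A (local_input v).

Definition inbox (s : config) (v : V) : nat -> seq bool := fun i =>
  match [pick u | adj v u && (id u == i)] with
  | Some u => a_send A (s u) (id v)
  | None => [::]
  end.

Definition update (t : config) (v : V) (x : St A) : config :=
  fun u => if u == v then x else t u.

Definition round (s : config) : seq (R * config) :=
  foldl (fun D v => flatten (map (fun wt =>
           map (fun px => (wt.1 * px.1, update wt.2 v px.2)) (a_step A (s v) (inbox s v))) D))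
        [:: (1, s)] (enum V).

Definition run (k : nat) : seq (R * config) :=
  iter k (fun D => flatten (map (fun wt =>
            map (fun ws => (wt.1 * ws.1, ws.2)) (round wt.2)) D))
       [:: (1, init_config)].

Definition nrounds : nat := a_rounds A #|V| c.

Definition output (s : config) : {set V} := [set v | a_out A (s v)].

Definition expected_value : R :=
  \sum_(wt <- run nrounds) wt.1 * f (output wt.2).

Definition congest (B : nat) : Prop :=
  forall k, (k < nrounds)%N ->
    all (fun wt => [forall v, forall u,
           adj v u ==> (size (a_send A (wt.2 v) (id u)) <= B * (up_log 2 #|V|).+1)%N]) (run k).

End Model.

(* Every node runs one step of the double-greedy algorithm of Buchbinder, Feldman, Naor and
   Schwartz in the round numbered by its colour.  The algorithm maintains sets X ⊆ Y (initially
   empty and everything) and, for the node v it processes, compares a = f(X + v) - f(X) and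
   b = f(Y - v) - f(Y); submodularity gives a + b >= 0.  Locality of f lets v compute a and b from
   the membership of its neighbours in X and Y, which it learns in one round; nodes of one colour
   are pairwise non-adjacent, so a round is a sequential pass over its colour class.
   For any O, the potential f X + f Y + k f((O ∪ X) ∩ Y) starts at >= k f(O) and ends at
   (2 + k) f(X) when X = Y.  With k = 1 it never decreases under the rule "add v iff a >= b",
   and with k = 2 it does not decrease in expectation when v is added with probability a/(a+b);
   this gives the factors 1/3 and 1/2. *)

From mathcomp Require Import all_boot all_order all_algebra.
From mathcomp Require Import ring lra.
From Stdlib Require List.
Import Order.TTheory GRing.Theory Num.Theory.
Set Implicit Arguments. Unset Strict Implicit. Unset Printing Implicit Defensive.
Local Open Scope ring_scope.

Section Distributions.
Variable R : realFieldType.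

Definition expect {T} (D : seq (R * T)) (h : T -> R) : R := \sum_(wt <- D) wt.1 * h wt.2.

Definition dbind {T S U} (D : seq (R * T)) (K : T -> seq (R * S)) (g : T -> S -> U)
  : seq (R * U) :=
  flatten [seq [seq (wt.1 * px.1, g wt.2 px.2) | px <- K wt.2] | wt <- D].

Definition is_distribution {T} (D : seq (R * T)) : bool :=
  all (fun wt => 0 <= wt.1) D && (\sum_(wt <- D) wt.1 == 1).

Lemma distribution_weight_ge0 {T} (D : seq (R * T)) w t :
  is_distribution D -> List.In (w, t) D -> 0 <= w.
Proof.
case/andP=> + _; elim: D => [|[w' t'] D IH] //= /andP[w'0 D0] [[<- _] | /IH]; exact.
Qed.

Definition dsupp {T} (D : seq (R * T)) (P : R -> T -> Prop) : Prop :=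
  forall w t, List.In (w, t) D -> P w t.

Lemma dsupp_cons {T} {w t} {D : seq (R * T)} {P} :
  dsupp ((w, t) :: D) P -> P w t /\ dsupp D P.
Proof. by move=> HD; split=> [|w' t' Hin]; apply: HD; [left | right]. Qed.

Lemma all_dsupp {T} (D : seq (R * T)) (P : R -> T -> Prop) (p : pred (R * T)) :
  dsupp D P -> (forall w t, P w t -> p (w, t)) -> all p D.
Proof.
elim: D => [|[w t] D IH] //= HD Pp; have [Pwt HD'] := dsupp_cons HD.
by rewrite Pp ?IH.
Qed.

Lemma dsupp_bind {T S U} (D : seq (R * T)) (K : T -> seq (R * S)) (g : T -> S -> U) P Q :
  dsupp D P ->
  (forall w t, P w t -> forall w' x, List.In (w', x) (K t) -> Q (w * w') (g t x)) ->
  dsupp (dbind D K g) Q.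
Proof.
move=> HD HK w0 t0; elim: D HD => [|[w t] D IH] //= HD.
have [Pwt HD'] := dsupp_cons HD.
move=> Hin; case: (List.in_app_or _ _ _ Hin) => [Hw|]; last exact: IH.
by have [[w' x] [[<- <-] Hx]] := (List.in_map_iff _ _ _).1 Hw; apply: HK.
Qed.

Lemma expect_bind {T S U} (D : seq (R * T)) (K : T -> seq (R * S)) (g : T -> S -> U) h :
  expect (dbind D K g) h =
  \sum_(wt <- D) wt.1 * \sum_(px <- K wt.2) px.1 * h (g wt.2 px.2).
Proof.
rewrite /expect /dbind; elim: D => [|wt D IH]; first by rewrite !big_nil.
rewrite /= big_cat big_cons IH big_map mulr_sumr.
by congr (_ + _); apply: eq_bigr => px _; rewrite mulrA.
Qed.

Lemma expect_le {T} (D : seq (R * T)) (h1 h2 : T -> R) :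
  dsupp D (fun w t => 0 <= w /\ h1 t <= h2 t) -> expect D h1 <= expect D h2.
Proof.
rewrite /expect; elim: D => [|[w t] D IH]; first by rewrite !big_nil.
move=> HD; have [[w0 le12] HD'] := dsupp_cons HD; rewrite !big_cons lerD ?IH //.
exact: ler_wpM2l.
Qed.

Lemma expect_le_bind {T S} (D : seq (R * T)) (K : T -> seq (R * S)) (g : T -> S -> T) h :
  dsupp D (fun w t => 0 <= w /\ h t <= \sum_(px <- K t) px.1 * h (g t px.2)) ->
  expect D h <= expect (dbind D K g) h.
Proof.
move=> HD; rewrite expect_bind.
exact: (expect_le (h2 := fun t => \sum_(px <- K t) px.1 * h (g t px.2)) HD).
Qed.

Section Fold.
Variables (I : eqType) (T : Type) (F : seq (R * T) -> I -> seq (R * T)).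
Variable P : seq I -> R -> T -> Prop.
Hypothesis F_inv : forall i l D, uniq (i :: l) -> dsupp D (P (i :: l)) -> dsupp (F D i) (P l).

Lemma dsupp_foldl l D : uniq l -> dsupp D (P l) -> dsupp (foldl F D l) (P [::]).
Proof.
elim: l D => [|i l IH] D //= /[dup] Hu /andP[_ ul] HD.
exact/IH/F_inv.
Qed.

Lemma expect_le_foldl h :
  (forall i l D, uniq (i :: l) -> dsupp D (P (i :: l)) -> expect D h <= expect (F D i) h) ->
  forall l D, uniq l -> dsupp D (P l) -> expect D h <= expect (foldl F D l) h.
Proof.
move=> F_ge; elim=> [|i l IH] D //= /[dup] Hu /andP[_ ul] HD.
exact: le_trans (F_ge _ _ _ Hu HD) (IH _ ul (F_inv Hu HD)).
Qed.
End Fold.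
End Distributions.

Section DecisionRules.
Variable R : realFieldType.

Definition det_rule (a b : R) : seq (R * bool) := [:: (1, b <= a)].

Definition rand_rule (a b : R) : seq (R * bool) :=
  if a <= 0 then [:: (1, false)] else if b <= 0 then [:: (1, true)]
  else [:: (a / (a + b), true); (b / (a + b), false)].

(* How the potential moves when the current node is decided: [P0] before, [G true] after
   adding it to [X], [G false] after removing it from [Y]; [a] and [b] are its marginals. *)
Definition double_greedy_gains (k a b P0 : R) (G : bool -> R) : Prop :=
  (G true - P0 = a /\ b - k * a <= G false - P0) \/
  (a - k * b <= G true - P0 /\ G false - P0 = b).

Definition improves_surely k (rule : R -> R -> seq (R * bool)) : Prop :=
  forall a b P0 G, 0 <= a + b -> double_greedy_gains k a b P0 G ->
  forall w d, List.In (w, d) (rule a b) -> P0 <= G d.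

Definition improves_in_expectation k (rule : R -> R -> seq (R * bool)) : Prop :=
  forall a b P0 G, 0 <= a + b -> double_greedy_gains k a b P0 G ->
  P0 <= \sum_(pd <- rule a b) pd.1 * G pd.2.

Lemma det_rule_improves : improves_surely 1 det_rule.
Proof.
move=> a b P0 G ab0 gains w d [] // [_ <-].
rewrite /double_greedy_gains !mul1r in gains.
case: (boolP (b <= a)) => [ba | ]; last rewrite -ltNge => ab;
  by case: gains => -[]; lra.
Qed.

Lemma rand_rule_improves : improves_in_expectation 2 rand_rule.
Proof.
move=> a b P0 G ab0; rewrite /double_greedy_gains /rand_rule => gains.
case: ifP => [a0|/negbT]; first by rewrite big_seq1 mul1r /=; lra.
case: ifP => [b0|/negbT]; first by rewrite big_seq1 mul1r /=; lra.
rewrite -!ltNge => b0 a0; rewrite !big_cons big_nil addr0 /=.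
have ab_gt0 : 0 < a + b by rewrite addr_gt0.
rewrite -mulrAC -[b / _ * _]mulrAC -mulrDl ler_pdivlMr //.
(* [(a + b)] times the expected gain is [a * gT + b * gF] >= [(a - b)^2] *)
have sq_ge0 : 0 <= (a - b) * (a - b) by rewrite -expr2 sqr_ge0.
case: gains => [[gT gF] | [gT gF]].
- have : 0 <= b * (G false - P0 - b + 2 * a) by apply: mulr_ge0; lra.
  nra.
- have : 0 <= a * (G true - P0 - a + 2 * b) by apply: mulr_ge0; lra.
  nra.
Qed.

Lemma det_rule_distribution a b : is_distribution (det_rule a b).
Proof. by rewrite /is_distribution /= big_seq1 ler01 eqxx. Qed.

Lemma rand_rule_distribution a b : is_distribution (rand_rule a b).
Proof.
rewrite /is_distribution /rand_rule; case: ifP => [_|/negbT]; first by rewrite /= big_seq1 ler01 eqxx.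
case: ifP => [_|/negbT]; first by rewrite /= big_seq1 ler01 eqxx.
rewrite -!ltNge => b0 a0; have ab_gt0 : 0 < a + b by rewrite addr_gt0.
rewrite /= !divr_ge0 ?ltW //= !big_cons big_nil addr0 -mulrDl divff //.
by rewrite gt_eqF.
Qed.
End DecisionRules.

Lemma setD1_id {V : finType} {X : {set V}} {v} : v \notin X -> X :\ v = X.
Proof. by move=> vX; apply/setP=> u; rewrite !inE; case: eqVneq => // ->; rewrite (negbTE vX). Qed.

Lemma setU1_id {V : finType} {X : {set V}} {v} : v \in X -> v |: X = X.
Proof. by move=> vX; apply/setP=> u; rewrite !inE; case: eqVneq => // ->. Qed.

Lemma setU1D1 (V : finType) (X : {set V}) v : v |: (X :\ v) = v |: X.
Proof. by apply/setP=> u; rewrite !inE; case: eqVneq. Qed.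

Lemma setv_id (V : finType) (X : {set V}) v : setv X v (v \in X) = X.
Proof. by rewrite /setv; case: ifPn => [/setU1_id | /setD1_id]. Qed.

Section DoubleGreedy.
Variables (R : realFieldType) (V : finType) (f : {set V} -> R).
Hypothesis f_submod : submodular f.

Lemma submodular_marginal_le {A B : {set V}} {v} : A \subset B -> v \notin B ->
  f (v |: B) - f B <= f (v |: A) - f A.
Proof.
move=> AB vB; have := f_submod (v |: A) B.
have -> : (v |: A) :|: B = v |: B by rewrite -setUA (setUidPr AB).
have -> : (v |: A) :&: B = A.
  by rewrite setIUl (setIidPl AB) (_ : [set v] :&: B = set0) ?set0U //; apply/setP=> u;
     rewrite !inE; case: eqVneq => // ->; rewrite (negbTE vB).
lra.
Qed.

Definition potential (k : R) (O X Y : {set V}) : R :=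
  f X + f Y + k * f ((O :|: X) :&: Y).

Section Step.
Variables (O X Y : {set V}) (v : V).
Hypotheses (XY : X \subset Y) (vX : v \notin X) (vY : v \in Y).
Let W := (O :|: X) :&: Y.
Let a := f (v |: X) - f X.
Let b := f (Y :\ v) - f Y.

(* [W] lies between [X] and [Y], so its marginal at [v] lies between theirs *)
Lemma marginal_sandwich : - b <= f (v |: W) - f (W :\ v) <= a.
Proof.
have WY : W :\ v \subset Y :\ v by apply: setSD; apply: subsetIr.
have XW : X \subset W :\ v.
  apply/subsetP=> u uX; rewrite !inE uX orbT (subsetP XY) // !andbT.
  by apply: contraNneq vX => <-.
have vYv : v \notin Y :\ v by rewrite !inE eqxx.
have vWv : v \notin W :\ v by rewrite !inE eqxx.
have := submodular_marginal_le WY vYv; have := submodular_marginal_le XW vWv.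
rewrite !setU1D1 (setU1_id vY) /a /b; lra.
Qed.

Lemma marginals_sum_ge0 : 0 <= a + b.
Proof. by have := marginal_sandwich; rewrite /a /b; lra. Qed.

Lemma potential_gains (k : R) : 0 <= k ->
  double_greedy_gains k a b (potential k O X Y)
    (fun d => potential k O (setv X v d) (setv Y v d)).
Proof.
move=> k0; have /andP[bW Wa] := marginal_sandwich.
have ET : (O :|: (v |: X)) :&: Y = v |: W.
  by rewrite setUCA setIUl (setIidPl _) ?sub1set.
have EF : (O :|: X) :&: (Y :\ v) = W :\ v by rewrite setIDA.
rewrite /double_greedy_gains /potential /setv (setU1_id vY) (setD1_id vX) ET EF -/W.
case: (boolP (v \in W)) => vW; [left | right].
- rewrite (setU1_id vW) in Wa *; split; first by rewrite /a; ring.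
  rewrite /b; have := ler_wpM2l k0 Wa; lra.
- rewrite (setD1_id vW) in bW *; split; last by rewrite /b; ring.
  rewrite /a; have := ler_wpM2l k0 bW; lra.
Qed.
End Step.
End DoubleGreedy.

Section Algorithm.
Variable R : realFieldType.

(* local input, number of completed rounds, decision *)
Definition dg_state := (LocalInput R * nat * option bool)%type.

(* A node announces whether it is in the lower set [X] and whether it is out of the
   upper set [Y]; undecided nodes lie in [Y] but not in [X]. *)
Definition dg_message (s : dg_state) : seq bool := [:: s.2 == Some true; s.2 == Some false].

Definition dg_step (rule : R -> R -> seq (R * bool)) (s : dg_state) (m : nat -> seq bool)
  : seq (R * dg_state) :=
  let: (li, k, d) := s in
  if k == li_color li then
    [seq (pd.1, (li, k.+1, Some pd.2)) |
       pd <- rule (li_g li (fun i => head false (m i)) true false)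
                  (li_g li (fun i => ~~ nth false (m i) 1) false true)]
  else [:: (1, (li, k.+1, d))].

Definition double_greedy rule : Alg R :=
  MkAlg (fun li => (li, 0%N, None)) (fun s _ => dg_message s) (dg_step rule)
    (fun s => s.2 == Some true) (fun _ c => c).

Lemma double_greedy_valid rule : (forall a b, is_distribution (rule a b)) ->
  alg_valid (double_greedy rule).
Proof.
move=> rule_dist [[li k] d] m /=; case: ifP => _; last by rewrite /= big_seq1 ler01 eqxx.
by rewrite all_map big_map; apply: rule_dist.
Qed.

Lemma double_greedy_det : alg_det (double_greedy (@det_rule R)).
Proof. by move=> [[li k] d] m /=; case: ifP; eexists. Qed.
End Algorithm.

Section Execution.
Variables (R : realFieldType) (rule : R -> R -> seq (R * bool)).
Hypothesis rule_dist : forall a b, is_distribution (rule a b).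
Variables (V : finType) (adj : rel V) (id : V -> nat) (c : nat) (col : V -> nat)
  (f : {set V} -> R).
Hypotheses (id_inj : injective id) (col_lt : forall v, (col v < c)%N)
  (col_adj : forall u v, adj u v -> col u != col v) (f_local : local_utility adj f).

Local Notation A := (double_greedy rule).
Local Notation cfg := (config V A).
Local Notation li u := (local_input adj id c col f u).

Definition lower_set (t : cfg) : {set V} := [set u | (t u).2 == Some true].
Definition upper_set (t : cfg) : {set V} := [set u | (t u).2 != Some false].

Definition decided_below (k : nat) (s : cfg) : Prop := forall u,
  (s u).1 = (li u, k) /\ (((s u).2 == None) = (k <= col u)%N).

(* [t] arises from [s] by letting the nodes outside [l] take their step of round [k] *)
Definition partial_round (s : cfg) (k : nat) (l : seq V) (t : cfg) : Prop := forall u,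
  (u \in l -> t u = s u) /\
  (u \notin l -> [/\ (t u).1 = (li u, k.+1), col u != k -> (t u).2 = (s u).2
                   & col u == k -> (t u).2 != None]).

Definition gain_in (t : cfg) v := f (v |: lower_set t) - f (lower_set t).
Definition gain_out (t : cfg) v := f (upper_set t :\ v) - f (upper_set t).

Lemma lower_sub_upper (t : cfg) : lower_set t \subset upper_set t.
Proof. by apply/subsetP=> u; rewrite !inE => /eqP ->. Qed.

Lemma lower_set_update (t : cfg) v x :
  lower_set (update t v x) = setv (lower_set t) v (x.2 == Some true).
Proof.
apply/setP=> u; rewrite /setv /update.
case: (eqVneq u v) => [->|uv]; case E: (x.2 == Some true);
  by rewrite !inE ?eqxx ?E ?(negbTE uv).
Qed.

Lemma upper_set_update (t : cfg) v x :
  upper_set (update t v x) = setv (upper_set t) v (x.2 != Some false).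
Proof.
apply/setP=> u; rewrite /setv /update.
case: (eqVneq u v) => [->|uv]; case E: (x.2 != Some false);
  by rewrite !inE ?eqxx ?E ?(negbTE uv).
Qed.

Lemma inbox_neighbour (s : cfg) v u : adj v u ->
  inbox adj id s v (id u) = dg_message (s u).
Proof.
move=> vu; rewrite /inbox; case: pickP => [u' /andP[_ /eqP /id_inj ->] // | /(_ u)].
by rewrite vu eqxx.
Qed.

Lemma local_oracle_marginal v L (Z : {set V}) :
  (forall u, adj v u -> L (id u) = (u \in Z)) ->
  forall d d', local_oracle adj id f v L d d' = f (setv Z v d) - f (setv Z v d').
Proof.
move=> LZ d d'; have [g gP] := f_local v; rewrite /local_oracle !gP.
congr (g _ d d'); apply/setP=> u; rewrite !inE.
by case: (boolP (adj v u)) => vu; rewrite ?andbF // LZ.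
Qed.

Lemma undecided_at_turn s k l v t : decided_below k s -> partial_round s k (v :: l) t ->
  col v = k -> t v = s v /\ (s v).2 = None.
Proof.
move=> sk st vk; split; first by apply: (st v).1; rewrite mem_head.
by apply/eqP; rewrite (sk v).2 vk.
Qed.

(* Neighbours of a node of colour [k] do not move in round [k], so the marginals the node
   reads off its inbox are those of the intermediate configuration [t]: the parallel round
   is a sequential double-greedy pass over the colour class. *)
Lemma step_partial_round s k l v t : decided_below k s -> partial_round s k (v :: l) t ->
  a_step A (s v) (inbox adj id s v) =
  if col v == k then [seq (pd.1, (li v, k.+1, Some pd.2)) | pd <- rule (gain_in t v) (gain_out t v)]
  else [:: (1, (li v, k.+1, (s v).2))].
Proof.
move=> sk st; have sv : s v = (li v, k, (s v).2) by rewrite -(sk v).1; case: (s v).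
rewrite {1}sv /= eq_sym; case: (eqVneq (col v) k) => // vk.
have [tv sv0] := undecided_at_turn sk st vk.
have nbr_same u : adj v u -> (t u).2 = (s u).2.
  move=> vu; have [uin uout] := st u.
  case: (boolP (u \in v :: l)) => ul; first by rewrite uin.
  have [_ keep _] := uout ul; apply: keep; rewrite -vk eq_sym; exact: col_adj.
have vX : v \notin lower_set t by rewrite inE tv sv0.
have vY : v \in upper_set t by rewrite inE tv sv0.
rewrite (@local_oracle_marginal v _ (lower_set t)); last first.
  by move=> u vu; rewrite inbox_neighbour //= inE nbr_same.
rewrite (@local_oracle_marginal v _ (upper_set t)); last first.
  by move=> u vu; rewrite inbox_neighbour //= inE nbr_same.
by rewrite /gain_in /gain_out /setv (setD1_id vX) (setU1_id vY).
Qed.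

Lemma step_support s k l v t w x : decided_below k s -> partial_round s k (v :: l) t ->
  List.In (w, x) (a_step A (s v) (inbox adj id s v)) ->
  [/\ x.1 = (li v, k.+1), col v != k -> x.2 = (s v).2 /\ w = 1
    & col v == k -> exists2 d, x.2 = Some d & List.In (w, d) (rule (gain_in t v) (gain_out t v))].
Proof.
move=> sk st; rewrite (step_partial_round sk st); case: (eqVneq (col v) k) => vk /=.
- by case/(List.in_map_iff _ _ _) => -[w' d] [[<- <-] Hin]; split=> // _; exists d.
- by case=> // -[<- <-].
Qed.

Lemma partial_round_update s k l v t w x : decided_below k s -> uniq (v :: l) ->
  partial_round s k (v :: l) t -> List.In (w, x) (a_step A (s v) (inbox adj id s v)) ->
  0 <= w /\ partial_round s k l (update t v x).
Proof.
move=> sk ul st wx; have [x1 x2 x3] := step_support sk st wx; split.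
  case: (eqVneq (col v) k) => [/eqP|] vk; last by rewrite (x2 vk).2.
  by have [d _ /(distribution_weight_ge0 (rule_dist _ _))] := x3 vk.
move=> u; rewrite /update; case: (eqVneq u v) => [->|uv].
  have vl : v \notin l by case/andP: ul.
  split; first by rewrite (negbTE vl).
  by move=> _; split=> // [/x2[] | /x3[d -> _]].
by have := st u; rewrite inE (negbTE uv).
Qed.

Lemma decided_below_round s k t : decided_below k s -> partial_round s k [::] t ->
  decided_below k.+1 t.
Proof.
move=> sk st u; have [t1 t2 t3] := (st u).2 isT; split=> //.
case: (eqVneq (col u) k) => [uk|uk]; first by rewrite uk ltnn; apply/negbTE/t3/eqP.
by rewrite t2 // (sk u).2 leq_eqVlt eq_sym (negbTE uk).
Qed.

Definition node_step (s : cfg) (v : V) (D : seq (R * cfg)) : seq (R * cfg) :=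
  dbind D (fun _ => a_step A (s v) (inbox adj id s v)) (fun t x => update t v x).

Lemma round_foldl s : round adj id s = foldl (fun D v => node_step s v D) [:: (1, s)] (enum V).
Proof. by []. Qed.

Definition round_inv s k (Q : cfg -> Prop) (l : seq V) (w : R) (t : cfg) : Prop :=
  0 <= w /\ partial_round s k l t /\ Q t.

Section Round.
Variables (s : cfg) (k : nat) (Q : cfg -> Prop).
Hypotheses (sk : decided_below k s) (Qs : Q s).
Hypothesis Q_step : forall l v t w x, uniq (v :: l) -> partial_round s k (v :: l) t -> Q t ->
  List.In (w, x) (a_step A (s v) (inbox adj id s v)) -> Q (update t v x).

Lemma node_step_inv v l D : uniq (v :: l) ->
  dsupp D (round_inv s k Q (v :: l)) -> dsupp (node_step s v D) (round_inv s k Q l).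
Proof.
move=> ul HD; apply: dsupp_bind HD _ => w t [w0 [st Qt]] w' x wx.
have [w'0 st'] := partial_round_update sk ul st wx.
by split; [apply: mulr_ge0 | split=> //; apply: Q_step ul st Qt wx].
Qed.

Lemma round_inv_init : dsupp [:: (1, s)] (round_inv s k Q (enum V)).
Proof. by move=> w t [] // [<- <-]; split=> //; split=> // u; rewrite mem_enum. Qed.

Lemma round_dsupp : dsupp (round adj id s) (fun w t => 0 <= w /\ decided_below k.+1 t /\ Q t).
Proof.
move=> w t; rewrite round_foldl => /(dsupp_foldl node_step_inv (enum_uniq _) round_inv_init).
by case=> w0 [st Qt]; split=> //; split=> //; apply: decided_below_round st.
Qed.
End Round.

Lemma round_expect_ge s k h : decided_below k s ->
  (forall l v t, uniq (v :: l) -> partial_round s k (v :: l) t ->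
     h t <= \sum_(px <- a_step A (s v) (inbox adj id s v)) px.1 * h (update t v px.2)) ->
  h s <= expect (round adj id s) h.
Proof.
move=> sk h_step; rewrite round_foldl.
have step_inv := @node_step_inv s k (fun _ => True) sk (fun _ _ _ _ _ _ _ _ _ => I).
have -> : h s = expect [:: (1, s)] h by rewrite /expect big_seq1 mul1r.
apply: (expect_le_foldl step_inv) (enum_uniq _) (@round_inv_init s k (fun _ => True) I).
move=> v l D ul HD.
by apply: expect_le_bind => w t /HD[w0 [st _]]; split=> //; exact: h_step ul st.
Qed.

Lemma decided_below_init : decided_below 0 (init_config adj id c col f A).
Proof. by move=> u; split. Qed.

Lemma run_succ k : run adj id c col f A k.+1 = dbind (run adj id c col f A k) (@round R V adj id A) (fun _ x => x).
Proof. by []. Qed.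

Lemma run_dsupp (Q : nat -> cfg -> Prop) : Q 0%N (init_config adj id c col f A) ->
  (forall k s, (k < c)%N -> decided_below k s -> Q k s ->
     dsupp (round adj id s) (fun w t => 0 <= w /\ decided_below k.+1 t /\ Q k.+1 t)) ->
  forall k, (k <= c)%N ->
  dsupp (run adj id c col f A k) (fun w t => 0 <= w /\ decided_below k t /\ Q k t).
Proof.
move=> Q0 Q_round; elim=> [|k IH] kc.
  by move=> w t [] // [<- <-]; split=> //; split=> //; apply: decided_below_init.
rewrite run_succ; apply: dsupp_bind (IH (ltnW kc)) _ => w t [w0 [tk Qt]] w' x wx.
by have [w'0 rest] := Q_round k t kc tk Qt w' x wx; split=> //; apply: mulr_ge0.
Qed.

Lemma run_decided k : (k <= c)%N ->
  dsupp (run adj id c col f A k) (fun w t => 0 <= w /\ decided_below k t).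
Proof.
have Q_round k' s : (k' < c)%N -> decided_below k' s -> True ->
    dsupp (round adj id s) (fun w t => 0 <= w /\ decided_below k'.+1 t /\ True).
  by move=> _ sk _; exact: (@round_dsupp s k' (fun _ => True) sk I (fun _ _ _ _ _ _ _ _ _ => I)).
by move=> kc w t /(run_dsupp I Q_round kc)[w0 [tk _]].
Qed.

Lemma run_expect_ge h : (forall k s, (k < c)%N -> decided_below k s -> h s <= expect (round adj id s) h) ->
  forall k, (k <= c)%N -> h (init_config adj id c col f A) <= expect (run adj id c col f A k) h.
Proof.
move=> h_round; elim=> [|k IH] kc; first by rewrite /expect big_seq1 mul1r.
apply: le_trans (IH (ltnW kc)) _; rewrite run_succ; apply: expect_le_bind => w t.
by case/(run_decided (ltnW kc)) => w0 tk; split=> //; exact: h_round kc tk.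
Qed.

Hypotheses (f_submod : submodular f) (f_nonneg : nonneg f).

Definition config_potential (k : R) (O : {set V}) (t : cfg) : R :=
  potential f k O (lower_set t) (upper_set t).

Lemma config_potential_update_same k O (t : cfg) v x : x.2 = (t v).2 ->
  config_potential k O (update t v x) = config_potential k O t.
Proof.
move=> xt; rewrite /config_potential lower_set_update upper_set_update xt.
have -> : ((t v).2 == Some true) = (v \in lower_set t) by rewrite inE.
have -> : ((t v).2 != Some false) = (v \in upper_set t) by rewrite inE.
by rewrite !setv_id.
Qed.

Lemma config_potential_update k O (t : cfg) v x d : x.2 = Some d ->
  config_potential k O (update t v x) =
  potential f k O (setv (lower_set t) v d) (setv (upper_set t) v d).
Proof. by move=> xd; rewrite /config_potential lower_set_update upper_set_update xd; case: d {xd}. Qed.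

Lemma config_potential_init k O :
  config_potential k O (init_config adj id c col f A) = f set0 + f setT + k * f O.
Proof.
rewrite /config_potential /potential.
have -> : lower_set (init_config adj id c col f A) = set0 by apply/setP=> u; rewrite !inE.
have -> : upper_set (init_config adj id c col f A) = setT by apply/setP=> u; rewrite !inE.
by rewrite setU0 setIT.
Qed.

Lemma config_potential_final k O (t : cfg) : decided_below c t ->
  config_potential k O t = (2 + k) * f (output t).
Proof.
move=> tc; have out_eq : upper_set t = output t.
  apply/setP=> u; rewrite !inE; have := (tc u).2; rewrite leqNgt col_lt /=.
  by case: (t u).2 => // -[].
have low_eq : lower_set t = output t by [].
rewrite /config_potential /potential out_eq low_eq.
rewrite (_ : (O :|: output t) :&: output t = output t); first ring.
by apply/setIidPr/subsetUr.
Qed.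

Lemma turn_gains (k : R) O s kk l v t : 0 <= k -> decided_below kk s ->
  partial_round s kk (v :: l) t -> col v = kk ->
  0 <= gain_in t v + gain_out t v /\
  double_greedy_gains k (gain_in t v) (gain_out t v) (config_potential k O t)
    (fun d => config_potential k O (update t v (li v, kk.+1, Some d))).
Proof.
move=> k0 sk st vk; have [tv sv0] := undecided_at_turn sk st vk.
have vX : v \notin lower_set t by rewrite inE tv sv0.
have vY : v \in upper_set t by rewrite inE tv sv0.
split; first exact: marginals_sum_ge0 (lower_sub_upper t) vX vY.
rewrite /double_greedy_gains !(@config_potential_update _ _ _ _ (_, _, Some _) _ erefl).
exact: (potential_gains f_submod O (lower_sub_upper t) vX vY k0).
Qed.

Lemma expected_output_ge (k : R) O : 0 <= k -> improves_in_expectation k rule ->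
  k * f O <= (2 + k) * expected_value adj id c col f A.
Proof.
move=> k0 rule_ok.
have pot_run : config_potential k O (init_config adj id c col f A) <=
               expect (run adj id c col f A c) (config_potential k O).
  apply: run_expect_ge (leqnn c) => kk s _ sk; apply: (round_expect_ge sk) => l v t ul st.
  rewrite (step_partial_round sk st); case: (eqVneq (col v) kk) => vk.
    by have [ab0 gains] := turn_gains O k0 sk st vk; rewrite big_map; exact: rule_ok ab0 gains.
  rewrite big_seq1 mul1r config_potential_update_same //=.
  by rewrite (st v).1 ?mem_head.
have -> : (2 + k) * expected_value adj id c col f A =
          expect (run adj id c col f A c) (fun t => (2 + k) * f (output t)).
  by rewrite /expected_value mulr_sumr; apply: eq_bigr => wt _; rewrite mulrCA.
have pot_final : expect (run adj id c col f A c) (config_potential k O) <=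
                 expect (run adj id c col f A c) (fun t => (2 + k) * f (output t)).
  apply: expect_le => w t /(run_decided (leqnn c))[w0 tc].
  by rewrite config_potential_final.
move: (le_trans pot_run pot_final); rewrite config_potential_init.
by have := f_nonneg set0; have := f_nonneg setT; lra.
Qed.

Lemma outputs_ge (k : R) : 0 <= k -> improves_surely k rule ->
  dsupp (run adj id c col f A c) (fun _ t => forall O, k * f O <= (2 + k) * f (output t)).
Proof.
move=> k0 rule_ok.
pose Q (_ : nat) (t : cfg) := forall O, k * f O <= config_potential k O t.
have Q0 : Q 0%N (init_config adj id c col f A).
  move=> O; rewrite config_potential_init.
  by have := f_nonneg set0; have := f_nonneg setT; lra.
have Q_round kk s : (kk < c)%N -> decided_below kk s -> Q kk s ->
    dsupp (round adj id s) (fun w t => 0 <= w /\ decided_below kk.+1 t /\ Q kk.+1 t).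
  move=> _ sk Qs; apply: (round_dsupp sk Qs) => l v t w x ul st Qt wx O.
  apply: le_trans (Qt O) _; have [x1 x2 x3] := step_support sk st wx.
  case: (eqVneq (col v) kk) => vk.
    have [ab0 gains] := turn_gains O k0 sk st vk; have [d xd wd] := x3 (introT eqP vk).
    have -> : x = (li v, kk.+1, Some d) by case: x x1 xd {x2 x3 wx} => ? ? /= -> ->.
    exact: rule_ok ab0 gains _ _ wd.
  by rewrite config_potential_update_same ?(x2 vk).1 ?(st v).1 ?mem_head.
move=> w t /(run_dsupp Q0 Q_round (leqnn c))[_ [tc Qt]] O.
by rewrite -(config_potential_final k O tc); apply: Qt.
Qed.
End Execution.

Lemma double_greedy_congest (R : realFieldType) rule (V : finType) (adj : rel V) id c col
    (f : {set V} -> R) :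
  congest adj id c col f (double_greedy rule) 2.
Proof.
move=> k _; apply: (all_dsupp (P := fun _ _ => True)) => // w t _.
by apply/forallP => v; apply/forallP => u; apply/implyP => _; rewrite leq_pmulr.
Qed.

Lemma fmax_le_natmul (R : realFieldType) (V : finType) (f : {set V} -> R) n (x : R) :
  (0 < n)%N -> nonneg f -> (forall O, f O <= n%:R * x) -> fmax f / n%:R <= x.
Proof.
move=> n0 f0 fx; rewrite ler_pdivrMr ?ltr0n // mulrC.
by apply: bigmax_le => [|O _]; [apply: le_trans (f0 set0) (fx set0) | apply: fx].
Qed.

Theorem mainTheorem7 (R : realFieldType) :
  (exists (C B : nat) (A : Alg R), alg_valid A /\
    forall (V : finType) (adj : rel V) (id : V -> nat) (c : nat) (col : V -> nat)
           (f : {set V} -> R),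
      simple_graph adj -> ids_ok id -> legal_coloring adj c col ->
      nonneg f -> submodular f -> local_utility adj f ->
      [/\ (nrounds V c A <= C * c)%N,
          congest adj id c col f A B &
          fmax f / 2%:R <= expected_value adj id c col f A])
  /\
  (exists (C B : nat) (A : Alg R), alg_det A /\
    forall (V : finType) (adj : rel V) (id : V -> nat) (c : nat) (col : V -> nat)
           (f : {set V} -> R),
      simple_graph adj -> ids_ok id -> legal_coloring adj c col ->
      nonneg f -> submodular f -> local_utility adj f ->
      [/\ (nrounds V c A <= C * c)%N,
          congest adj id c col f A B &
          all (fun wt => fmax f / 3%:R <= f (output wt.2))
              (run adj id c col f A (nrounds V c A))]).
Proof.
split.
- exists 1%N, 2%N, (double_greedy (@rand_rule R)).
  split=> [|V adj id c col f _ [id_inj _] [col_lt col_adj] f0 f_sub f_loc].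
    exact: double_greedy_valid (@rand_rule_distribution R).
  split; [by rewrite mul1n | exact: double_greedy_congest |].
  apply: fmax_le_natmul => // O.
  have := expected_output_ge (@rand_rule_distribution R) id_inj col_lt col_adj f_loc f_sub f0 O
            (ler0n _ 2) (@rand_rule_improves R).
  lra.
- exists 1%N, 2%N, (double_greedy (@det_rule R)).
  split=> [|V adj id c col f _ [id_inj _] [col_lt col_adj] f0 f_sub f_loc].
    exact: double_greedy_det.
  split; [by rewrite mul1n | exact: double_greedy_congest |].
  apply: all_dsupp (outputs_ge (@det_rule_distribution R) id_inj col_lt col_adj f_loc f_sub f0
                      ler01 (@det_rule_improves R)) _ => w t out_ge.
  by apply: fmax_le_natmul => // O; have := out_ge O; lra.
Qed.
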